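(* Let $k\ge1$ and let $X\in GL(2k,\mathbb F_2)$ be the permutation matrix of a product of disjoint transpositions of $[2k]$, each transposition exchanging an index in $\{1,\dots,k\}$ with an index in $\{k+1,\dots,2k\}$. Then $X$ is a product of matrices each of which is either an in-block factor $\mathrm{diag}(C_1,C_2)$ with $C_1,C_2\in GL(k,\mathbb F_2)$, or the codeblock exchange $\begin{pmatrix}0&I_k\\ I_k&0\end{pmatrix}$, or one of the transversal factors $\begin{pmatrix}I_k&I_k\\0&I_k\end{pmatrix}$, $\begin{pmatrix}I_k&0\\ I_k&I_k\end{pmatrix}$, with at most four transversal factors in total.
   Context: Setting: two codeblocks of a CSS code each encoding $k$ logical qubits; logical qubit $j$ of block $1$ has index $j$ and of block $2$ has index $k+j$. A logical CNOT/SWAP circuit is described by its action on $X$-type logical operators, a matrix in $GL(2k,\mathbb F_2)$, and composition is matrix multiplication. In-block factors and the codeblock exchange (relabelling of the two codeblocks) have zero physical cost; each transversal factor has physical depth one. *)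

From HB Require Import structures.
From mathcomp Require Import all_boot all_order all_algebra all_fingroup.
Set Implicit Arguments. Unset Strict Implicit. Unset Printing Implicit Defensive.
Import GRing.Theory.
Local Open Scope ring_scope.

(* Logical CNOT/SWAP circuits on two codeblocks of k logical qubits:
   matrices in GL(2k, F_2), indices 'I_(k+k); block 1 = first k indices. *)

Definition inblock (k : nat) (A : 'M['F_2]_(k + k)) : Prop :=
  exists C1 C2 : 'M['F_2]_k,
    [/\ C1 \in unitmx, C2 \in unitmx & A = block_mx C1 0 0 C2].

Definition exchange (k : nat) : 'M['F_2]_(k + k) := block_mx 0 1%:M 1%:M 0.

Definition transU (k : nat) : 'M['F_2]_(k + k) := block_mx 1%:M 1%:M 0 1%:M.
Definition transL (k : nat) : 'M['F_2]_(k + k) := block_mx 1%:M 0 1%:M 1%:M.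

Definition transversal_factor (k : nat) (A : 'M['F_2]_(k + k)) : bool :=
  (A == transU k) || (A == transL k).

Definition allowed_factor (k : nat) (A : 'M['F_2]_(k + k)) : Prop :=
  inblock A \/ A = exchange k \/ transversal_factor A.

Definition mxprod (k : nat) (fs : seq 'M['F_2]_(k + k)) : 'M['F_2]_(k + k) :=
  foldr (fun A B => A *m B) 1%:M fs.

(* s is a product of disjoint transpositions each exchanging an index of
   block 1 (i < k) with an index of block 2 (i >= k): an involution whose
   non-fixed points are moved across the two blocks. *)
Definition cross_involution (k : nat) (s : 'S_(k + k)) : Prop :=
  (forall i, s (s i) = i) /\
  (forall i, s i != i -> (i < k)%N != (s i < k)%N).

From HB Require Import structures.
From mathcomp Require Import all_boot all_order all_algebra all_fingroup.
From mathcomp Require Import zify.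
Set Implicit Arguments. Unset Strict Implicit. Unset Printing Implicit Defensive.
Import GRing.Theory.
Local Open Scope ring_scope.

(* The permutation matrix X = [[a, b], [c, d]] is an involution whose diagonal
   blocks are the idempotent indicators of fixed points; over F_2 this forces
   X = U(b) L(c) U(b) with b c b = b, where U(N) = [[1, N], [0, 1]] and
   L(N) = [[1, 0], [N, 1]].  In-block conjugations carry b to its rank normal
   form P = pid_mx r and then c to P as well, and U(P) L(P) U(P) = U(1) L(P) U(1).
   Finally L(P) = L(J) L(J + P) with J and J + P invertible, and L(U) for an
   invertible U is L(1) conjugated by diag(1, U). *)

Lemma addmxx_F2 m n (A : 'M['F_2]_(m, n)) : A + A = 0.
Proof.
by apply/matrixP => i j; rewrite !mxE -mulr2n -mulr_natr (@pchar_Fp_0 2) ?mulr0.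
Qed.

Lemma mulF2_idem (x : 'F_2) : x * x = x.
Proof. by case: x => -[|[|//]] hx; apply/val_inj. Qed.

Lemma unitmx_one_add_strict_lower (R : comUnitRingType) n (N : 'M[R]_n) :
  (forall i j : 'I_n, (i <= j)%N -> N i j = 0) -> 1%:M + N \in unitmx.
Proof.
move=> N_strict; have trigN : is_trig_mx (1%:M + N).
  apply/is_trig_mxP => i j lt_ij.
  by rewrite !mxE N_strict ?(ltnW lt_ij) // (ltn_eqF lt_ij : (i == j) = false) addr0.
rewrite unitmxE (det_trig trigN) big1 ?unitr1 // => i _.
by rewrite !mxE N_strict // eqxx addr0.
Qed.

Section BlockTransvections.
Variable k : nat.
Implicit Types A B N K P b c : 'M['F_2]_k.

Definition bdiag A B : 'M['F_2]_(k + k) := block_mx A 0 0 B.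
Definition upper_mx N : 'M['F_2]_(k + k) := block_mx 1%:M N 0 1%:M.
Definition lower_mx N : 'M['F_2]_(k + k) := block_mx 1%:M 0 N 1%:M.

Lemma bdiag_mul A B A' B' :
  bdiag A B *m bdiag A' B' = bdiag (A *m A') (B *m B').
Proof. by rewrite /bdiag mulmx_block !(mulmx0, mul0mx, addr0, add0r). Qed.

Lemma bdiag1 : bdiag 1%:M 1%:M = 1%:M.
Proof. by rewrite /bdiag -scalar_mx_block. Qed.

Lemma bdiag_conj_upper A A' B B' N : A *m A' = 1%:M -> B *m B' = 1%:M ->
  bdiag A B *m upper_mx N *m bdiag A' B' = upper_mx (A *m N *m B').
Proof.
move=> hA hB; rewrite /bdiag /upper_mx !mulmx_block.
by rewrite !(mulmx0, mul0mx, mulmx1, mul1mx, addr0, add0r) hA hB.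
Qed.

Lemma bdiag_conj_lower A A' B B' N : A *m A' = 1%:M -> B *m B' = 1%:M ->
  bdiag A B *m lower_mx N *m bdiag A' B' = lower_mx (B *m N *m A').
Proof.
move=> hA hB; rewrite /bdiag /lower_mx !mulmx_block.
by rewrite !(mulmx0, mul0mx, mulmx1, mul1mx, addr0, add0r) hA hB.
Qed.

Lemma bdiag_conj_ulu A A' B B' N K : A *m A' = 1%:M -> B *m B' = 1%:M ->
  bdiag A B *m (upper_mx N *m lower_mx K *m upper_mx N) *m bdiag A' B' =
  upper_mx (A *m N *m B') *m lower_mx (B *m K *m A') *m upper_mx (A *m N *m B').
Proof.
move=> hA hB; set G := bdiag A B; set G' := bdiag A' B'.
have hG : G' *m G = 1%:M by rewrite bdiag_mul (mulmx1C hA) (mulmx1C hB) bdiag1.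
rewrite -(bdiag_conj_upper N hA hB) -(bdiag_conj_lower K hA hB) -/G -/G'.
by rewrite !mulmxA -[G *m _ *m G' *m G]mulmxA hG mulmx1
  -[G *m _ *m _ *m G' *m G]mulmxA hG mulmx1.
Qed.

Lemma lower_mxD N K : lower_mx N *m lower_mx K = lower_mx (N + K).
Proof.
rewrite /lower_mx mulmx_block.
by rewrite !(mulmx0, mul0mx, mulmx1, mul1mx, addr0, add0r) addrC.
Qed.

Lemma upper_lower_upper b c : b *m c *m b = b ->
  upper_mx b *m lower_mx c *m upper_mx b =
  block_mx (1%:M + b *m c) b c (1%:M + c *m b).
Proof.
move=> hbcb; rewrite /upper_mx /lower_mx !mulmx_block.
rewrite !(mulmx0, mul0mx, mulmx1, mul1mx, addr0, add0r) mulmxDl mul1mx hbcb.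
by rewrite addmxx_F2 add0r [c *m b + _]addrC.
Qed.

Lemma upper_lower_upper_idem P : P *m P = P ->
  upper_mx P *m lower_mx P *m upper_mx P = transU k *m lower_mx P *m transU k.
Proof.
move=> hP; rewrite upper_lower_upper ?hP // /transU /lower_mx !mulmx_block.
rewrite !(mulmx0, mul0mx, mulmx1, mul1mx, addr0, add0r).
by rewrite [1%:M + P + _]addrC addrA addmxx_F2 add0r [P + _]addrC.
Qed.

End BlockTransvections.

Section SquareMatrices.
Variable k : nat.
Implicit Types P h : 'M['F_2]_k.

Lemma involutive_one_add (N : 'M['F_2]_k) : N *m N = 0 ->
  (1%:M + N) *m (1%:M + N) = 1%:M.
Proof.
by move=> hN; rewrite mulmxDl mul1mx mulmxDr mulmx1 hN addr0 -addrA addmxx_F2 addr0.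
Qed.

(* With Q = 1 + P, the involutions are A = 1 + P h Q and B = 1 + Q h P. *)
Lemma idem_pair_involutions P h :
  P *m P = P -> P *m h *m P = P -> h *m P *m h = h ->
  exists A B : 'M['F_2]_k,
    [/\ A *m A = 1%:M, B *m B = 1%:M, A *m P *m B = P & B *m P *m A = h].
Proof.
move=> hP hPhP hhPh; pose Q := 1%:M + P.
have hQP : Q *m P = 0 by rewrite mulmxDl mul1mx hP addmxx_F2.
have hPQ : P *m Q = 0 by rewrite mulmxDr mulmx1 hP addmxx_F2.
set A := 1%:M + P *m h *m Q; set B := 1%:M + Q *m h *m P.
have hAA : A *m A = 1%:M.
  by apply: involutive_one_add; rewrite -!mulmxA (mulmxA Q) hQP !(mul0mx, mulmx0).
have hBB : B *m B = 1%:M.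
  by apply: involutive_one_add; rewrite -!mulmxA (mulmxA P) hPQ !(mul0mx, mulmx0).
have hBh : B *m h = P *m h.
  rewrite mulmxDl mul1mx -!mulmxA (mulmxA h) hhPh mulmxDl mul1mx.
  by rewrite addrA addmxx_F2 add0r.
have hBhA : B *m h *m A = P.
  rewrite hBh mulmxDr mulmx1 !mulmxA hPhP mulmxDr mulmx1 hPhP.
  by rewrite addrA addmxx_F2 add0r.
exists A, B; split=> //.
  by rewrite mulmxDl mul1mx -mulmxA hQP mulmx0 addr0 mulmxDr mulmx1 !mulmxA hPQ
    !mul0mx addr0.
by rewrite -hBhA !mulmxA hBB mul1mx -mulmxA hAA mulmx1.
Qed.

Lemma ord_pred_lt n (i : 'I_n) : (ord_pred i < n.-1)%N -> (ord_pred i < i)%N.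
Proof.
case: i => -[|m] hm /=; rewrite ?add0n ?addSn /=.
  by rewrite modn_small ?ltnn // prednK ?ltnSn // (leq_ltn_trans _ hm).
by rewrite modnDr modn_small ?ltnSn // ltnW.
Qed.

(* With t : i |-> i - 1 (mod k) and r < k, perm_mx t *m pid_mx r is strictly
   lower triangular, so J = perm_mx t^-1 and J + pid_mx r are units. *)
Lemma pid_mx_add_units r : (r < k)%N ->
  exists U1 U2 : 'M['F_2]_k,
    [/\ U1 \in unitmx, U2 \in unitmx & pid_mx r = U1 + U2].
Proof.
move=> ltrk; pose t := perm (@ord_pred_inj k).
pose J : 'M['F_2]_k := perm_mx t^-1.
have unitJ : J \in unitmx by apply: unitmx_perm.
have unitN : (1%:M + perm_mx t *m pid_mx r : 'M['F_2]_k) \in unitmx.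
  apply: unitmx_one_add_strict_lower => i j.
  rewrite -row_permE !mxE permE; case: andP => // -[/eqP <- ltir] le_ij.
  by have := ord_pred_lt (i := i); lia.
exists J, (J *m (1%:M + perm_mx t *m pid_mx r)); split; first by [].
  by rewrite unitmx_mul unitJ.
rewrite mulmxDr mulmx1 mulmxA -perm_mxM mulVg perm_mx1 mul1mx.
by rewrite addrA addmxx_F2 add0r.
Qed.

End SquareMatrices.

Definition realizable k (n : nat) (M : 'M['F_2]_(k + k)) : Prop :=
  exists fs : seq 'M['F_2]_(k + k),
    [/\ (forall A, A \in fs -> allowed_factor A), M = mxprod fs
      & (count (fun A => transversal_factor A) fs <= n)%N].

Lemma mxprod_cat k (fs gs : seq 'M['F_2]_(k + k)) :
  mxprod (fs ++ gs) = mxprod fs *m mxprod gs.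
Proof. by elim: fs => [|A fs IH] /=; rewrite ?mul1mx // IH mulmxA. Qed.

Section Realizable.
Variable k : nat.
Hypothesis k_gt0 : (0 < k)%N.
Implicit Types M N : 'M['F_2]_(k + k).

Lemma realizable_mul m n M N :
  realizable m M -> realizable n N -> realizable (m + n) (M *m N).
Proof.
move=> [fs [hfs -> cfs]] [gs [hgs -> cgs]]; exists (fs ++ gs); split.
- by move=> A; rewrite mem_cat => /orP[/hfs|/hgs].
- by rewrite mxprod_cat.
- by rewrite count_cat leq_add.
Qed.

Lemma realizable_le m n M : (m <= n)%N -> realizable m M -> realizable n M.
Proof.
by move=> le_mn [fs [hfs -> cfs]]; exists fs; split=> //; apply: leq_trans le_mn.
Qed.

Lemma bdiag_not_transversal (A B : 'M['F_2]_k) :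
  transversal_factor (bdiag A B) = false.
Proof.
have h01 : (0 : 'M['F_2]_k) != 1%:M.
  apply/eqP => /matrixP /(_ (Ordinal k_gt0) (Ordinal k_gt0)).
  by rewrite !mxE eqxx => /eqP; rewrite eq_sym oner_eq0.
by apply/norP; split; apply/eqP => /eq_block_mx [_ h2 h3 _]; move: h01;
  [rewrite h2 | rewrite h3]; rewrite eqxx.
Qed.

Lemma realizable_bdiag (A B : 'M['F_2]_k) :
  A \in unitmx -> B \in unitmx -> realizable 0 (bdiag A B).
Proof.
move=> hA hB; exists [:: bdiag A B]; split; last 2 first.
- by rewrite /= mulmx1.
- by rewrite /= bdiag_not_transversal.
by move=> C; rewrite inE => /eqP ->; left; exists A, B.
Qed.

Lemma realizable_transversal M : transversal_factor M -> realizable 1 M.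
Proof.
move=> hM; exists [:: M]; split; last 2 first.
- by rewrite /= mulmx1.
- by rewrite /= hM.
by move=> C; rewrite inE => /eqP ->; right; right.
Qed.

Lemma realizable_transU : realizable 1 (transU k).
Proof. by apply: realizable_transversal; rewrite /transversal_factor eqxx. Qed.

Lemma realizable_transL : realizable 1 (transL k).
Proof. by apply: realizable_transversal; rewrite /transversal_factor eqxx orbT. Qed.

Lemma realizable_conj n (A A' B B' : 'M['F_2]_k) M :
  A *m A' = 1%:M -> B *m B' = 1%:M -> realizable n M ->
  realizable n (bdiag A B *m M *m bdiag A' B').
Proof.
move=> /mulmx1_unit[uA uA'] /mulmx1_unit[uB uB'] hM.
rewrite -[n]add0n -[(0 + n)%N]addn0.
by do 2?apply: realizable_mul => //; apply: realizable_bdiag.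
Qed.

Lemma realizable_lower_add_units (U1 U2 : 'M['F_2]_k) :
  U1 \in unitmx -> U2 \in unitmx -> realizable 2 (lower_mx (U1 + U2)).
Proof.
have lower_unit (U : 'M['F_2]_k) : U \in unitmx -> realizable 1 (lower_mx U).
  move=> hU; have := bdiag_conj_lower 1%:M (mulmx1 1%:M) (mulmxV hU).
  rewrite !mulmx1 => <-.
  exact: realizable_conj (mulmx1 _) (mulmxV hU) realizable_transL.
move=> hU1 hU2; rewrite -lower_mxD.
exact: realizable_mul (lower_unit _ hU1) (lower_unit _ hU2).
Qed.

Lemma realizable_lower_pid r :
  (r <= k)%N -> realizable 2 (lower_mx (pid_mx r : 'M_k)).
Proof.
rewrite leq_eqVlt => /orP[/eqP ->|/pid_mx_add_units[U1 [U2 [hU1 hU2 ->]]]].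
  by rewrite pid_mx_1; apply: (realizable_le (isT : (1 <= 2)%N) realizable_transL).
exact: realizable_lower_add_units.
Qed.

Lemma realizable_regular_pair (b c : 'M['F_2]_k) :
  b *m c *m b = b -> c *m b *m c = c ->
  realizable 4 (block_mx (1%:M + b *m c) b c (1%:M + c *m b)).
Proof.
move=> hbcb hcbc; rewrite -upper_lower_upper //.
have := mulmx_ebase b; have := col_ebase_unit b; have := row_ebase_unit b.
have := rank_leq_col b; move: (col_ebase b) (row_ebase b) (\rank b).
move=> L R r le_rk uR uL /esym defb; set P : 'M['F_2]_k := pid_mx r.
set h := R *m c *m L.
have defc : c = invmx R *m h *m invmx L.
  by rewrite /h !mulmxA mulVmx // mul1mx mulmxK.
have hP : P *m P = P by rewrite pid_mx_id.
have hPhP : P *m h *m P = P.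
  apply: (can_inj (mulKmx uL)); apply: (can_inj (mulmxK uR)).
  have -> : L *m (P *m h *m P) *m R = b *m c *m b by rewrite defb /h !mulmxA.
  by rewrite hbcb defb.
have hhPh : h *m P *m h = h.
  transitivity (R *m (c *m b *m c) *m L); last by rewrite hcbc.
  by rewrite defb /h !mulmxA.
have [A [B [hAA hBB hAPB hBPA]]] := idem_pair_involutions hP hPhP hhPh.
have -> : upper_mx b *m lower_mx c *m upper_mx b =
    bdiag L (invmx R) *m (upper_mx P *m lower_mx h *m upper_mx P) *m
    bdiag (invmx L) R.
  by rewrite bdiag_conj_ulu ?mulmxV ?mulVmx // -defb -defc.
apply: realizable_conj (mulmxV uL) (mulVmx uR) _.
have -> : upper_mx P *m lower_mx h *m upper_mx P =
    bdiag A B *m (upper_mx P *m lower_mx P *m upper_mx P) *m bdiag A B.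
  by rewrite bdiag_conj_ulu // hAPB hBPA.
apply: realizable_conj hAA hBB _; rewrite upper_lower_upper_idem //.
exact: realizable_mul
  (realizable_mul realizable_transU (realizable_lower_pid le_rk)) realizable_transU.
Qed.

End Realizable.

Lemma diag_mx_F2_idem k (d : 'rV['F_2]_k) : diag_mx d *m diag_mx d = diag_mx d.
Proof.
rewrite mul_diag_mx; apply/matrixP => i j; rewrite !mxE.
by case: eqP => [->|_]; rewrite ?mulr1n ?mulF2_idem ?mulr0n ?mulr0.
Qed.

Lemma block_involution_regular k (a b c d : 'M['F_2]_k) :
  block_mx a b c d *m block_mx a b c d = 1%:M ->
  a *m a = a -> d *m d = d -> a *m b = 0 -> c *m a = 0 ->
  [/\ block_mx a b c d = block_mx (1%:M + b *m c) b c (1%:M + c *m b),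
      b *m c *m b = b & c *m b *m c = c].
Proof.
rewrite mulmx_block (scalar_mx_block k k 1) => /eq_block_mx[+ _ _ +] haa hdd.
rewrite haa hdd => h1 h4 hab hca.
have hbc : b *m c = 1%:M + a by rewrite -h1 addrC addrA addmxx_F2 add0r.
have hcb : c *m b = 1%:M + d by rewrite -h4 -addrA addmxx_F2 addr0.
split.
- by rewrite hbc hcb !addrA !addmxx_F2 !add0r.
- by rewrite hbc mulmxDl mul1mx hab addr0.
- by rewrite -mulmxA hbc mulmxDr mulmx1 hca addr0.
Qed.

Section CrossInvolution.
Variables (k : nat) (s : 'S_(k + k)).
Hypothesis hs : cross_involution s.
Local Notation X := (perm_mx s : 'M['F_2]_(k + k)).

Lemma cross_involution_eq (i j : 'I_(k + k)) :
  (i < k)%N = (j < k)%N -> (s i == j) = (i == j) && (s i == i).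
Proof.
move=> same_block; apply/idP/idP => [/eqP sij|/andP[/eqP <- //]].
case: (eqVneq (s i) i) => [fixi|movi]; first by rewrite -sij fixi eqxx.
by have := hs.2 i movi; rewrite sij same_block eqxx.
Qed.

Lemma perm_mx_ul :
  ulsubmx X = diag_mx (\row_i (s (lshift k i) == lshift k i)%:R).
Proof.
apply/matrixP => i j.
rewrite !mxE (@cross_involution_eq _ (lshift k j)) /= ?ltn_ord // eq_lshift.
by case: eqP => [->|_]; rewrite ?mulr1n ?mulr0n.
Qed.

Lemma perm_mx_dr :
  drsubmx X = diag_mx (\row_i (s (rshift k i) == rshift k i)%:R).
Proof.
apply/matrixP => i j.
rewrite !mxE (@cross_involution_eq _ (rshift k j)) /= ?ltnNge ?leq_addr //.
by rewrite eq_rshift; case: eqP => [->|_]; rewrite ?mulr1n ?mulr0n.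
Qed.

Lemma perm_mx_cross_regular :
  let b := ursubmx X in let c := dlsubmx X in
  [/\ X = block_mx (1%:M + b *m c) b c (1%:M + c *m b),
      b *m c *m b = b & c *m b *m c = c].
Proof.
move=> b c; rewrite -[X in X = _]submxK; apply: block_involution_regular.
- rewrite submxK -perm_mxM.
  have -> : (s * s = 1)%g by apply/permP => i; rewrite permM perm1 hs.1.
  exact: perm_mx1.
- by rewrite perm_mx_ul diag_mx_F2_idem.
- by rewrite perm_mx_dr diag_mx_F2_idem.
- rewrite perm_mx_ul mul_diag_mx; apply/matrixP => i j; rewrite !mxE.
  by case: eqP => [->|_]; rewrite ?eq_lrshift ?mulr0 ?mul0r.
- rewrite perm_mx_ul mul_mx_diag; apply/matrixP => i j; rewrite !mxE.
  case: eqP => [sij|_]; last by rewrite mul0r.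
  by rewrite -{2}sij (inj_eq perm_inj) eq_lrshift mulr0.
Qed.

End CrossInvolution.

Theorem mainTheorem2 (k : nat) (hk : (0 < k)%N) (s : 'S_(k + k))
  (hs : cross_involution s) :
  exists fs : seq 'M['F_2]_(k + k),
    [/\ (forall A, A \in fs -> allowed_factor A),
        perm_mx s = mxprod fs
      & (count (fun A => transversal_factor A) fs <= 4)%N].
Proof.
have [defX hbcb hcbc] := perm_mx_cross_regular hs.
by rewrite defX; have := realizable_regular_pair hk hbcb hcbc.
Qed.
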